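(* Let $z = \frac{a + b\sqrt{-D}}{c} \in G_D(\mathbb{Q})$ where $\gcd(a,b) = 1$ and $c > 1$, and let $c = p_1^{\alpha_1} \cdots p_k^{\alpha_k}$ be the prime factorization of $c$. Then each $p_i$ is an odd prime with $\left(\frac{-D}{p_i}\right)=1$ (so $\zeta_{p_i}$ is defined), and $$z \ = \ \pm \zeta_{p_1}^{\pm \alpha_1}\cdots \zeta_{p_k}^{\pm \alpha_k},$$ where the signs of the exponents may be chosen independently.
   Context: Let $D>1$ be a square-free integer with $-D \equiv 2$ or $3 \pmod 4$, and assume the class group $C(-4D)$ of primitive positive-definite binary quadratic forms of discriminant $-4D$ is a free $\mathbb{Z}_2$-module, i.e. $C(-4D)\cong(\mathbb{Z}/2\mathbb{Z})^n$ for some $n\ge 0$. Let $G_D(\mathbb{Q}) := \{a + b\sqrt{-D} \in \mathbb{Q}[\sqrt{-D}] : a^2 + Db^2 = 1\}$, a group under multiplication. For each odd prime $q$ with Legendre symbol $\left(\frac{-D}{q}\right) = 1$, there exist unique positive integers $x_0, y_0$ with $\gcd(x_0,y_0)=1$ and $q^2 = x_0^2 + D y_0^2$; define $\zeta_q := \frac{x_0 + y_0\sqrt{-D}}{q} \in G_D(\mathbb{Q})$. *)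

From mathcomp Require Import all_boot all_order all_algebra all_field.
Set Implicit Arguments. Unset Strict Implicit. Unset Printing Implicit Defensive.
Import Order.TTheory GRing.Theory Num.Theory.
Local Open Scope ring_scope.

Definition squarefree (D : nat) : Prop :=
  forall p : nat, prime p -> ~~ (p * p %| D)%N.

Definition legendre_negD_one (D p : nat) : bool :=
  ~~ (p %| D)%N && [exists x : 'I_p, (p %| x ^ 2 + D)%N].

Definition bqf (a b c x y : int) : int := a * x ^+ 2 + b * x * y + c * y ^+ 2.

Definition properly_equiv (a b c a' b' c' : int) : Prop :=
  exists p q r s : int, p * s - q * r = 1 /\
    forall x y : int, bqf a b c (p * x + q * y) (r * x + s * y) = bqf a' b' c' x y.

Definition prim_pos_def (d a b c : int) : Prop :=
  b ^+ 2 - 4%:R * a * c = d /\ 0 < a /\ gcdz (gcdz a b) c = 1.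

(* The form class group C(d) is an elementary abelian 2-group, i.e.
   C(d) = (Z/2Z)^n for some n: every class equals its inverse.  In the
   form class group the inverse of the class of (a,b,c) is the class of
   (a,-b,c), so this says every primitive positive definite form of
   discriminant d is properly equivalent to its opposite. *)
Definition class_group_elem2 (d : int) : Prop :=
  forall a b c : int, prim_pos_def d a b c -> properly_equiv a b c a (- b) c.

Definition sqrtmD (D : nat) : algC := sqrtC (- (D%:R)).

Definition in_GD (D : nat) (z : algC) : Prop :=
  exists u v : rat, z = ratr u + ratr v * sqrtmD D /\ u ^+ 2 + D%:R * v ^+ 2 = 1.

(* zeta_q = (x0 + y0 sqrt(-D)) / q with x0, y0 > 0 coprime and
   q^2 = x0^2 + D y0^2 (such x0,y0 are unique; necessarily x0, y0 <= q).
   If no such pair exists we return 1 (never used under the hypotheses). *)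
Definition zeta (D q : nat) : algC :=
  match [pick xy : 'I_q.+1 * 'I_q.+1 |
          [&& (0 < xy.1)%N, (0 < xy.2)%N, coprime xy.1 xy.2 &
              (q ^ 2 == xy.1 ^ 2 + D * xy.2 ^ 2)%N]] with
  | Some xy => ((xy.1 : nat)%:R + (xy.2 : nat)%:R * sqrtmD D) / q%:R
  | None => 1
  end.

From mathcomp Require Import all_boot all_order all_algebra all_field.
From mathcomp Require Import zify ring.
Set Implicit Arguments. Unset Strict Implicit. Unset Printing Implicit Defensive.
Import Order.TTheory GRing.Theory Num.Theory.
Local Open Scope ring_scope.

(* Write N(a, b) = a^2 + D b^2.  If z = (a + b sqrt(-D)) / c is in lowest terms then
   N(a, b) = c^2, and every prime p | c is odd (reduce mod 4), prime to D (D is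
   square-free), and -D = (a / b)^2 mod p.  For a root r of -D mod p, the form
   f = (p, 2r, k) of discriminant -4D is properly equivalent to its inverse because the
   class group is 2-torsion; such an equivalence writes p = f(P, R) with R <> 0, and
   p f(P, R) = (pP + rR)^2 + D R^2 gives p^2 = x^2 + D y^2 with x, y > 0 coprime, the
   data of zeta_p.  Choosing the sign of y so that p | b x - a y, the element
   x + y sqrt(-D) divides a + b sqrt(-D) with a quotient of norm (c / p)^2, and the same
   sign works for the quotient; after v_p(c) steps zeta_p^(+-v_p(c)) is split off, and
   induction on c handles the remaining primes. *)

Lemma Euclid_dvdzM (p : nat) (x y : int) : prime p ->
  (p%:Z %| x * y)%Z = (p%:Z %| x)%Z || (p%:Z %| y)%Z.
Proof. by move=> pp; rewrite !dvdzE abszM Euclid_dvdM. Qed.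

Lemma Euclid_dvdzX2 (p : nat) (x : int) : prime p ->
  (p%:Z %| x ^+ 2)%Z = (p%:Z %| x)%Z.
Proof. by move=> pp; rewrite expr2 Euclid_dvdzM // orbb. Qed.

Lemma prime_ndvdz_coprime (p : nat) (x y : int) : prime p -> coprimez x y ->
  (p%:Z %| x)%Z -> ~~ (p%:Z %| y)%Z.
Proof.
move=> pp cxy px; apply/negP => py.
by have := dvdz_gcd p x y; rewrite px py (eqP cxy) dvdz1 => /eqP/= p1; rewrite p1 in pp.
Qed.

Lemma odd_prime_ndvd2 (p : nat) : prime p -> odd p -> ~~ (p %| 2)%N.
Proof. by move=> pp; apply: contraL; rewrite dvdn_prime2 // => /eqP ->. Qed.

Lemma prime_sq_dvdz_half (p : nat) (A A' w : int) : prime p -> ~~ (p %| 2)%N ->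
  ~~ (p%:Z %| w)%Z -> A + A' = 2 * w -> (p%:Z %| A)%Z ->
  (p%:Z ^+ 2 %| A * A')%Z -> (p%:Z ^+ 2 %| A)%Z.
Proof.
move=> pp p2 pw AA' pA.
have pA' : ~~ (p%:Z %| A')%Z.
  apply: contra pw => pA'; have : (p%:Z %| 2 * w)%Z by rewrite -AA' rpredD.
  by rewrite Euclid_dvdzM // dvdzE (negbTE p2).
by rewrite Gauss_dvdzl // coprimezE abszX coprimeXl // prime_coprime // -[p]/`|p%:Z|%N -dvdzE.
Qed.

Section NormForm.

Variable D : nat.

Definition normD (a b : int) : int := a ^+ 2 + D%:Z * b ^+ 2.

Definition qint (a b : int) : algC := a%:~R + b%:~R * sqrtmD D.

Lemma normD_sqr_absz (a b : int) (n : nat) : normD a b = n%:Z ^+ 2 ->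
  (`|a| ^ 2 + D * `|b| ^ 2 = n ^ 2)%N.
Proof.
rewrite /normD => Nab; apply/eqP; rewrite -eqz_nat PoszD PoszM -!natz !natrX !natz.
by rewrite !abszE !real_normK ?num_real // Nab.
Qed.

Lemma normD_nat (x y : nat) : normD x y = (x ^ 2 + D * y ^ 2)%N :> int.
Proof. by rewrite /normD PoszD PoszM -!natz !natrX !natz. Qed.

Lemma normD_mul (a b x y : int) :
  normD (a * x - D%:Z * b * y) (a * y + b * x) = normD a b * normD x y.
Proof. by rewrite /normD; ring. Qed.

Lemma qintM (a b x y : int) :
  qint a b * qint x y = qint (a * x - D%:Z * b * y) (a * y + b * x).
Proof.
have sqrtmD2 : sqrtmD D ^+ 2 = - (D%:Z)%:~R by rewrite /sqrtmD sqrtCK.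
rewrite /qint !(rmorphB, rmorphD, rmorphM) /=.
by rewrite -[(D%:Z)%:~R]opprK -sqrtmD2; ring.
Qed.

Lemma qint_mul_conj (a b : int) : qint a b * qint a (- b) = (normD a b)%:~R.
Proof.
rewrite qintM (_ : a * - b + b * a = 0); last by ring.
by rewrite /qint mul0r addr0 /normD; congr _%:~R; ring.
Qed.

Lemma prime_dvd_normD_coprime (p : nat) (u v : int) :
  prime p -> ~~ (p %| D)%N -> coprimez u v -> (p%:Z %| normD u v)%Z ->
  ~~ (p%:Z %| u)%Z && ~~ (p%:Z %| v)%Z.
Proof.
move=> pp pD guv pN.
have pu_pv : (p%:Z %| u)%Z = (p%:Z %| v)%Z.
  apply/idP/idP => [pu | pv].
    have : (p%:Z %| D%:Z * v ^+ 2)%Z.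
      by rewrite -(rpredDl _ (_ : (p%:Z %| u ^+ 2)%Z)) // Euclid_dvdzX2.
    by rewrite Euclid_dvdzM // dvdzE (negbTE pD) Euclid_dvdzX2.
  rewrite -Euclid_dvdzX2 // -(rpredDr _ (_ : (p%:Z %| D%:Z * v ^+ 2)%Z)) //.
  by rewrite dvdz_mull // Euclid_dvdzX2.
case pu: (p%:Z %| u)%Z; last by rewrite -pu_pv pu.
by move: (prime_ndvdz_coprime pp guv pu); rewrite -pu_pv pu.
Qed.

Lemma prime_dvd_cross (p : nat) (a b x y : int) : prime p ->
  (p%:Z %| normD a b)%Z -> (p%:Z %| normD x y)%Z ->
  (p%:Z %| b * x - a * y)%Z || (p%:Z %| b * x + a * y)%Z.
Proof.
move=> pp pab pxy; rewrite -Euclid_dvdzM //.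
rewrite (_ : _ * _ = b ^+ 2 * normD x y - y ^+ 2 * normD a b); last by rewrite /normD; ring.
by rewrite rpredB // dvdz_mull.
Qed.

Lemma coprimez_factor (a b x y : int) :
  coprimez (a * x - D%:Z * b * y) (a * y + b * x) -> coprimez a b.
Proof.
case/coprimezP=> [[u v] /= uv1]; apply/coprimezP.
by exists (u * x + v * y, v * x - u * D%:Z * y); rewrite /= -uv1; ring.
Qed.

End NormForm.

Section Descent.

Variables (D p : nat) (x y : int).
Hypotheses (pp : prime p) (p_odd : odd p) (pD : ~~ (p %| D)%N).
Hypotheses (Nxy : normD D x y = p%:Z ^+ 2) (cxy : coprimez x y).

Let p_ndvd2 : ~~ (p %| 2)%N. Proof. exact: odd_prime_ndvd2. Qed.

Let p_dvd_sq : (p%:Z %| p%:Z ^+ 2)%Z. Proof. exact: dvdz_mulr (dvdzz _). Qed.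

Let p_dvd_Nxy : (p%:Z %| normD D x y)%Z. Proof. by rewrite Nxy. Qed.

Let p_sq_neq0 : p%:Z ^+ 2 != 0.
Proof. by rewrite expf_neq0 // gt_eqF // ltz_nat prime_gt0. Qed.

(* [A + B sqrt(-D)] is [(a + b sqrt(-D)) (x - y sqrt(-D))], so [p^2] dividing [A] and
   [B] means that [x + y sqrt(-D)] divides [a + b sqrt(-D)]. *)
Lemma descent_step (a b : int) : coprimez a b ->
  (p%:Z ^+ 2 %| normD D a b)%Z -> (p%:Z %| b * x - a * y)%Z ->
  exists a1 b1, a = a1 * x - D%:Z * b1 * y /\ b = a1 * y + b1 * x.
Proof.
move=> cab p2N pB.
have /andP[na nb] := prime_dvd_normD_coprime pp pD cab (dvdz_trans p_dvd_sq p2N).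
have /andP[nx _] := prime_dvd_normD_coprime pp pD cxy p_dvd_Nxy.
set A := a * x + D%:Z * b * y; set B := b * x - a * y.
have pA : (p%:Z %| A)%Z.
  have : (p%:Z %| b * A)%Z.
    rewrite (_ : b * A = a * B + y * normD D a b); last by rewrite /A /B /normD; ring.
    by rewrite rpredD ?dvdz_mull // (dvdz_trans p_dvd_sq p2N).
  by rewrite Euclid_dvdzM // (negbTE nb).
have p2A : (p%:Z ^+ 2 %| A)%Z.
  apply: (prime_sq_dvdz_half (A' := a * x - D%:Z * b * y) (w := a * x)) => //.
  - by rewrite Euclid_dvdzM // negb_or na nx.
  - by rewrite /A; ring.
  rewrite (_ : A * _ = x ^+ 2 * normD D a b - D%:Z * b ^+ 2 * normD D x y).
    by rewrite Nxy rpredB // dvdz_mull.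
  by rewrite /A /normD; ring.
have p2B : (p%:Z ^+ 2 %| B)%Z.
  apply: (prime_sq_dvdz_half (A' := b * x + a * y) (w := b * x)) => //.
  - by rewrite Euclid_dvdzM // negb_or nb nx.
  - by rewrite /B; ring.
  rewrite (_ : B * _ = b ^+ 2 * normD D x y - y ^+ 2 * normD D a b).
    by rewrite Nxy rpredB // dvdz_mull.
  by rewrite /B /normD; ring.
case/dvdzP: p2A => a1 eA; case/dvdzP: p2B => b1 eB.
exists a1, b1; split; apply: (mulIf p_sq_neq0).
  transitivity (A * x - D%:Z * B * y); first by rewrite -Nxy /A /B /normD; ring.
  by rewrite eA eB; ring.
transitivity (A * y + B * x); first by rewrite -Nxy /A /B /normD; ring.
by rewrite eA eB; ring.
Qed.

(* The last clause keeps the sign of [y] fixed along the descent: [p] cannot divide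
   [b1 x + a1 y], which is [b]. *)
Lemma descent_once (a b : int) : coprimez a b ->
  (p%:Z ^+ 2 %| normD D a b)%Z -> (p%:Z %| b * x - a * y)%Z ->
  exists a1 b1, [/\ coprimez a1 b1, normD D a b = normD D a1 b1 * p%:Z ^+ 2,
    qint D a b = qint D a1 b1 * qint D x y &
    (p%:Z %| normD D a1 b1)%Z -> (p%:Z %| b1 * x - a1 * y)%Z].
Proof.
move=> cab p2N pB; have pN := dvdz_trans p_dvd_sq p2N.
have /andP[_ nb] := prime_dvd_normD_coprime pp pD cab pN.
have [a1 [b1 [ea eb]]] := descent_step cab p2N pB.
rewrite {}ea {}eb in cab nb *; exists a1, b1; split.
- exact: coprimez_factor cab.
- by rewrite normD_mul Nxy.
- by rewrite qintM.
move=> pN1; have /orP[] := prime_dvd_cross pp pN1 p_dvd_Nxy => // pb.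
by rewrite addrC pb in nb.
Qed.

Lemma descent_pow (k : nat) (m a b : int) : coprimez a b ->
  normD D a b = (p%:Z ^+ k * m) ^+ 2 ->
  ((p%:Z %| normD D a b)%Z -> (p%:Z %| b * x - a * y)%Z) ->
  exists a' b', [/\ coprimez a' b', normD D a' b' = m ^+ 2 &
    qint D a b = qint D a' b' * qint D x y ^+ k].
Proof.
elim: k a b => [|k IH] a b cab Nab pB.
  by exists a, b; rewrite Nab expr0 mul1r mulr1.
have Nab' : normD D a b = (p%:Z ^+ k * m) ^+ 2 * p%:Z ^+ 2.
  by rewrite Nab -exprMn (exprSr _ k); congr (_ ^+ 2); ring.
have p2N : (p%:Z ^+ 2 %| normD D a b)%Z by rewrite Nab' dvdz_mull.
have [a1 [b1 [cab1 N1 q1 pB1]]] := descent_once cab p2N (pB (dvdz_trans p_dvd_sq p2N)).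
have N1' : normD D a1 b1 = (p%:Z ^+ k * m) ^+ 2 by apply: (mulIf p_sq_neq0); rewrite -N1.
have [a' [b' [cab' N' q']]] := IH a1 b1 cab1 N1' pB1.
by exists a', b'; rewrite q1 q' -mulrA -exprSr.
Qed.

End Descent.

Lemma sqrn_mod4 (n : nat) : (n ^ 2 = odd n %[mod 4])%N.
Proof. by rewrite -{1}(odd_double_half n); case: (odd n); lia. Qed.

Lemma normD_sq_odd (D A B C : nat) : (D %% 4 = 1 \/ D %% 4 = 2)%N ->
  coprime A B -> (A ^ 2 + D * B ^ 2 = C ^ 2)%N -> odd C.
Proof.
move=> hD cAB E; apply: contraT => evenC.
have oddAB : odd A || odd B.
  apply: contraLR cAB; rewrite negb_or -!dvdn2 => evenAB.
  by apply/negP => /eqP gAB; have := dvdn_gcd 2 A B; rewrite gAB evenAB.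
have := congr1 (modn^~ 4) E; rewrite /= -modnDm -modnMmr !sqrn_mod4 (negbTE evenC).
by move: oddAB; case: (odd A); case: (odd B); case: hD; lia.
Qed.

Lemma normD_sq_sqfree_ndvd (D p : nat) (a b c : int) : squarefree D -> prime p ->
  coprimez a b -> normD D a b = c ^+ 2 -> (p%:Z %| c)%Z -> ~~ (p %| D)%N.
Proof.
move=> sqfD pp cab Nab pc; apply/negP => pD.
have pDb : (p%:Z %| D%:Z * b ^+ 2)%Z by rewrite dvdz_mulr // dvdzE.
have pa : (p%:Z %| a)%Z.
  have : (p%:Z %| normD D a b)%Z by rewrite Nab Euclid_dvdzX2.
  by rewrite /normD (rpredDr _ pDb) Euclid_dvdzX2.
case/dvdnP: pD => D' eD.
have pD' : ~~ (p %| D')%N.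
  by apply: contra (sqfD p pp) => pD'; rewrite eD dvdn_mul.
have : (p%:Z ^+ 2 %| p%:Z * (D'%:Z * b ^+ 2))%Z.
  have -> : p%:Z * (D'%:Z * b ^+ 2) = c ^+ 2 - a ^+ 2.
    by rewrite -Nab /normD eD PoszM; ring.
  by rewrite rpredB // dvdz_exp2r.
rewrite expr2 dvdz_mul2l ?gt_eqF ?ltz_nat ?prime_gt0 //.
rewrite Euclid_dvdzM // dvdzE (negbTE pD') Euclid_dvdzX2 //= => pb.
by have := prime_ndvdz_coprime pp cab pa; rewrite pb.
Qed.

Lemma legendre_of_dvd_normD (D p : nat) (a b : int) : prime p ->
  ~~ (p %| D)%N -> ~~ (p%:Z %| b)%Z -> (p%:Z %| normD D a b)%Z ->
  legendre_negD_one D p.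
Proof.
move=> pp pD pb pN; rewrite /legendre_negD_one pD /=.
have p_neq0 : p%:Z != 0 by rewrite gt_eqF ?ltz_nat ?prime_gt0.
have [u [v uv]] := Bezoutz b p.
have {}uv : u * b + v * p%:Z = 1.
  rewrite uv; apply/eqP; change (coprimez b p%:Z).
  by rewrite coprimezE coprime_sym prime_coprime // -dvdzE.
(* Since [u b = 1 mod p], the residue of [a u] is a square root of [-D] mod [p]. *)
set r := absz ((a * u) %% p%:Z)%Z.
have rE : r%:Z = ((a * u) %% p%:Z)%Z by rewrite gez0_abs ?modz_ge0.
have r_lt : (r < p)%N by rewrite -ltz_nat rE ltz_mod.
apply/existsP; exists (Ordinal r_lt); change (p%:Z %| (r ^ 2 + D)%N%:Z)%Z.
rewrite PoszD -!natz natrX !natz rE.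
have -> : ((a * u) %% p%:Z)%Z = a * u - ((a * u) %/ p%:Z)%Z * p%:Z.
  by rewrite {2}(divz_eq (a * u) p); ring.
set q := ((a * u) %/ p%:Z)%Z.
have -> : (a * u - q * p%:Z) ^+ 2 + D%:Z = u ^+ 2 * normD D a b
    + p%:Z * (q ^+ 2 * p%:Z - 2 * a * u * q + D%:Z * (2 * u * b * v + v ^+ 2 * p%:Z)).
  transitivity ((a * u - q * p%:Z) ^+ 2 + D%:Z * (u * b + v * p%:Z) ^+ 2).
    by rewrite uv expr1n mulr1.
  by rewrite /normD; ring.
by apply: rpredD; [exact: dvdz_mull | exact: dvdz_mulr (dvdzz _)].
Qed.

Section Representation.

Variables (D p : nat).
Hypothesis pp : prime p.

Lemma legendre_root_ndvd (r : nat) : ~~ (p %| 2)%N -> ~~ (p %| D)%N ->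
  (p %| r ^ 2 + D)%N -> ~~ (p %| 2 * r)%N.
Proof.
move=> p2 pD prD; rewrite Euclid_dvdM // negb_or p2 /=.
by apply: contra pD => pr; rewrite -(dvdn_addr D (_ : p %| r ^ 2)%N) // Euclid_dvdX // pr.
Qed.

Lemma root_form_prim (r k : nat) : (k * p = r ^ 2 + D)%N -> ~~ (p %| 2 * r)%N ->
  prim_pos_def (- (4 * D)%:Z) p (2 * r)%N k.
Proof.
move=> kp p2r; split; first by lia.
split; first by rewrite ltz_nat prime_gt0.
by rewrite -prime_coprime // in p2r; rewrite /gcdz /= (eqP p2r) gcd1n.
Qed.

Lemma rep_of_equiv_opposite (r k : nat) : (k * p = r ^ 2 + D)%N ->
  ~~ (p %| 2 * r)%N ->
  properly_equiv p (2 * r)%N k p (- (2 * r)%N%:Z) k ->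
  exists X Y : int, Y != 0 /\ normD D X Y = p%:Z ^+ 2.
Proof.
(* The first column [(P, R)] of the equivalence represents [p], and
   [p (p P^2 + 2 r P R + k R^2) = (p P + r R)^2 + D R^2]; if [R] were [0], comparing the
   values at [(1, 1)] and [(1, -1)] would give [p | 2 r]. *)
move=> kp p2r [P [Q [R [S [det H]]]]].
have fPR : p%:Z * P ^+ 2 + (2 * r)%N%:Z * P * R + k%:Z * R ^+ 2 = p%:Z.
  by move: (H 1 0); rewrite /bqf !(mulr1, mulr0, addr0, expr1n, expr0n) /=.
exists (p%:Z * P + r%:Z * R), R; split; last first.
  have eD : D%:Z = k%:Z * p%:Z - r%:Z ^+ 2 by lia.
  transitivity (p%:Z * (p%:Z * P ^+ 2 + (2 * r)%N%:Z * P * R + k%:Z * R ^+ 2)).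
    by rewrite /normD eD PoszM; ring.
  by rewrite fPR.
apply: contra p2r => /eqP R0; rewrite {}R0 in det H.
have PS1 : P * S = 1 by rewrite -det; ring.
have : 4 * (p%:Z * (- (P * Q)) - (2 * r)%N%:Z) = 0.
  transitivity (- (bqf p (2 * r)%N k (P * 1 + Q * 1) (0 * 1 + S * 1)
     - bqf p (2 * r)%N k (P * 1 + Q * (-1)) (0 * 1 + S * (-1))
     - (bqf p (- (2 * r)%N%:Z) k 1 1 - bqf p (- (2 * r)%N%:Z) k 1 (-1)))
     + 4 * r%:Z * (P * S - 1)).
    by rewrite /bqf PoszM; ring.
  by rewrite !H PS1; ring.
move/eqP; rewrite mulf_eq0 /= subr_eq0 => /eqP e.
have : (p%:Z %| (2 * r)%N%:Z)%Z by rewrite -e dvdz_mulr.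
by rewrite dvdzE.
Qed.

Lemma coprime_pos_rep (X Y : int) : (1 < D)%N -> ~~ (p %| D)%N -> Y != 0 ->
  normD D X Y = p%:Z ^+ 2 ->
  exists x0 y0 : nat,
    [/\ (0 < x0)%N, (0 < y0)%N, coprime x0 y0 & (p ^ 2 = x0 ^ 2 + D * y0 ^ 2)%N].
Proof.
move=> D_gt1 pD Y_neq0 NXY; exists `|X|%N, `|Y|%N.
have N : (`|X| ^ 2 + D * `|Y| ^ 2 = p ^ 2)%N.
  exact: normD_sqr_absz NXY.
have Y_gt0 : (0 < `|Y|)%N by rewrite absz_gt0.
have Y_lt : (`|Y| < p)%N.
  rewrite -(ltn_exp2r _ _ (isT : 0 < 2)%N) -N.
  by apply: leq_trans (leq_addl _ _); rewrite ltn_Pmull // expn_gt0 Y_gt0.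
have pY : ~~ (p %| `|Y|)%N by rewrite gtnNdvd.
split=> //.
- rewrite lt0n; apply/eqP => X0; move: N; rewrite X0 exp0n // add0n => N.
  have : (p %| D * `|Y| ^ 2)%N by rewrite N Euclid_dvdX // dvdnn.
  by rewrite Euclid_dvdM // (negbTE pD) Euclid_dvdX // (negbTE pY).
have : (gcdn `|X| `|Y| %| p)%N.
  rewrite -(dvdn_pexp2r _ _ (isT : 0 < 2)%N) -N.
  apply: dvdn_add; [|apply: dvdn_mull]; apply: dvdn_exp2r.
    exact: dvdn_gcdl.
  exact: dvdn_gcdr.
case/primeP: pp => _ /[apply] /orP[] // /eqP gp.
by move: pY; rewrite -gp dvdn_gcdr.
Qed.

End Representation.

Lemma sqrtmD_indep (D : nat) (u v : rat) : (0 < D)%N ->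
  ratr u + ratr v * sqrtmD D = 0 -> u = 0 /\ v = 0.
Proof.
move=> D_gt0 /eqP; rewrite addr_eq0 => /eqP uv.
have : ratr (u ^+ 2 + D%:R * v ^+ 2) = 0 :> algC.
  by rewrite rmorphD rmorphM rmorph_nat !rmorphXn /= uv sqrrN exprMn /sqrtmD sqrtCK; ring.
move/eqP; rewrite fmorph_eq0 (paddr_eq0 (sqr_ge0 u) (mulr_ge0 (ler0n _ D) (sqr_ge0 v))).
by rewrite sqrf_eq0 mulf_eq0 pnatr_eq0 eqn0Ngt D_gt0 sqrf_eq0 /= => /andP[/eqP -> /eqP ->].
Qed.

Lemma in_GD_normD (D c : nat) (a b : int) : (0 < D)%N -> (0 < c)%N ->
  in_GD D (qint D a b / c%:R) -> normD D a b = c%:Z ^+ 2.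
Proof.
move=> D_gt0 c_gt0 [u [v [z_uv Nuv]]].
have c_neq0 (R : numFieldType) : c%:R != 0 :> R by rewrite pnatr_eq0 -lt0n.
have [/eqP + /eqP] : u - a%:~R / c%:R = 0 /\ v - b%:~R / c%:R = 0.
  apply: (sqrtmD_indep D_gt0); rewrite !(rmorphB, fmorph_div) /= !rmorph_int !rmorph_nat.
  rewrite (_ : _ + _ = ratr u + ratr v * sqrtmD D - qint D a b / c%:R); last first.
    by rewrite /qint; field; exact: c_neq0.
  by rewrite -z_uv subrr.
rewrite !subr_eq0 => /eqP u_ac /eqP v_bc; rewrite u_ac v_bc in Nuv.
apply: (@intr_inj rat); rewrite /normD rmorphD rmorphM !rmorphXn /=.
transitivity ((c%:Z)%:~R ^+ 2 * ((a%:~R / c%:R) ^+ 2 + D%:R * (b%:~R / c%:R) ^+ 2) : rat).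
  by field; exact: c_neq0.
by rewrite Nuv mulr1.
Qed.

Lemma zetaE (D p : nat) : (1 < D)%N -> prime p -> odd p ->
  legendre_negD_one D p -> class_group_elem2 (- (4 * D)%:Z) ->
  exists x0 y0 : nat, [/\ coprimez x0 y0, normD D x0 y0 = p%:Z ^+ 2 &
    zeta D p = qint D x0 y0 / p%:R].
Proof.
move=> D_gt1 pp p_odd /andP[pD /existsP[r prD]] hcl.
have p2r := legendre_root_ndvd pp (odd_prime_ndvd2 pp p_odd) pD prD.
have kp : ((r ^ 2 + D) %/ p * p = r ^ 2 + D)%N := divnK prD.
have equiv_opp := hcl _ _ _ (root_form_prim pp kp p2r).
have [X [Y [Y_neq0 NXY]]] := rep_of_equiv_opposite pp kp p2r equiv_opp.
have [x0 [y0 [x0_gt0 y0_gt0 cxy E]]] := coprime_pos_rep pp D_gt1 pD Y_neq0 NXY.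
rewrite /zeta; case: pickP => [xy /and4P[_ _ cxy' /eqP E'] | none].
  by exists xy.1, xy.2; rewrite coprimezE normD_nat -E' expr2 -PoszM mulnn.
have x0_lt : (x0 < p.+1)%N by rewrite ltnS -(leq_exp2r _ _ (isT : 0 < 2)%N) E leq_addr.
have y0_lt : (y0 < p.+1)%N.
  rewrite ltnS -(leq_exp2r _ _ (isT : 0 < 2)%N) E.
  by apply: leq_trans (leq_addl _ _); rewrite leq_pmull // ltnW.
by have := none (Ordinal x0_lt, Ordinal y0_lt); rewrite /= x0_gt0 y0_gt0 cxy E eqxx.
Qed.

Lemma zeta_exprz (D p x0 y0 : nat) (eps : bool) (k : nat) : prime p ->
  normD D x0 y0 = p%:Z ^+ 2 -> zeta D p = qint D x0 y0 / p%:R ->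
  zeta D p ^ ((-1) ^+ eps * k%:Z) = (qint D x0 ((-1) ^+ eps * y0%:Z) / p%:R) ^+ k.
Proof.
move=> pp N0 ->; case: eps; last by rewrite !mul1r.
have p_neq0 : p%:R != 0 :> algC by rewrite pnatr_eq0 -lt0n prime_gt0.
have q_conj : qint D x0 y0 * qint D x0 (- y0%:Z) = p%:R ^+ 2.
  by rewrite qint_mul_conj N0 rmorphXn /=.
have q_neq0 : qint D x0 y0 != 0.
  by have := expf_neq0 2 p_neq0; rewrite -q_conj mulf_eq0 negb_or => /andP[].
rewrite !mulN1r -exprz_inv -exprnP invf_div; congr (_ ^+ _).
by apply/eqP; rewrite eqr_div // -expr2 -q_conj mulrC.
Qed.

Lemma logn_partC (p q n : nat) : q != p -> logn q n`_p^' = logn q n.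
Proof.
by move=> qp; rewrite -logn_part partn_part ?logn_part // => r; rewrite !inE => /eqP ->.
Qed.

Lemma big_primes_partC (R : comPzSemiRingType) (F G : nat -> nat -> R) (n p : nat) :
  p \in primes n -> (forall q, q != p -> F q =1 G q) ->
  \prod_(q <- primes n) F q (logn q n) =
    F p (logn p n) * \prod_(q <- primes n`_p^') G q (logn q n`_p^').
Proof.
move=> pn FG; rewrite (bigD1_seq p) ?primes_uniq //= primes_part big_filter.
congr (_ * _); apply: eq_big => [q | q qp]; first by rewrite !inE.
by rewrite FG ?logn_partC.
Qed.

Section Factorization.

Variable D : nat.
Hypotheses (D_gt1 : (1 < D)%N) (sqfD : squarefree D).
Hypotheses (D_mod4 : (D %% 4 = 1 \/ D %% 4 = 2)%N) (hcl : class_group_elem2 (- (4 * D)%:Z)).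

Lemma qint_unit (a b : int) : normD D a b = 1 -> exists s : bool, qint D a b = (-1) ^+ s.
Proof.
move=> /(normD_sqr_absz (n := 1)) N.
have b0 : `|b|%N = 0%N by move: N; case: `|b|%N => // k; have := D_gt1; nia.
have a1 : `|a|%N = 1%N by move: N; rewrite b0; nia.
have {}b0 : b = 0 by apply/eqP; rewrite -absz_eq0 b0.
exists (a < 0); rewrite /qint b0 mul0r addr0 {1}(intEsign a) a1 mulr1.
by rewrite rmorphXn rmorphN rmorph1.
Qed.

Lemma prime_dvd_normD_sq (a b : int) (c p : nat) : coprimez a b ->
  normD D a b = c%:Z ^+ 2 -> prime p -> (p %| c)%N ->
  odd p /\ legendre_negD_one D p.
Proof.
move=> cab Nab pp pc.
have pN : (p%:Z %| normD D a b)%Z by rewrite Nab Euclid_dvdzX2 // dvdzE.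
have pD : ~~ (p %| D)%N.
  by apply: (normD_sq_sqfree_ndvd sqfD pp cab Nab); rewrite dvdzE.
have /andP[_ pb] := prime_dvd_normD_coprime pp pD cab pN.
split; last exact: legendre_of_dvd_normD pp pD pb pN.
apply: dvdn_odd pc (normD_sq_odd D_mod4 _ (normD_sqr_absz Nab)).
by rewrite -coprimezE.
Qed.

Lemma peel_prime (c p : nat) (a b : int) : (0 < c)%N -> coprimez a b ->
  normD D a b = c%:Z ^+ 2 -> prime p -> (p %| c)%N ->
  exists (eps : bool) (a' b' : int),
    [/\ coprimez a' b', normD D a' b' = (c`_p^')%:Z ^+ 2 &
      qint D a b / c%:R =
        zeta D p ^ ((-1) ^+ eps * (logn p c)%:Z) * (qint D a' b' / (c`_p^')%:R)].
Proof.
move=> c_gt0 cab Nab pp pc.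
have [p_odd lg] := prime_dvd_normD_sq cab Nab pp pc; have /andP[pD _] := lg.
have [x0 [y0 [cxy0 Nxy0 zetaxy0]]] := zetaE D_gt1 pp p_odd lg hcl.
have [eps pB] : exists eps : bool, (p%:Z %| b * x0 - a * ((-1) ^+ eps * y0%:Z))%Z.
  have pN : (p%:Z %| normD D a b)%Z by rewrite Nab Euclid_dvdzX2 // dvdzE.
  have pNxy : (p%:Z %| normD D x0 y0)%Z by rewrite Nxy0 Euclid_dvdzX2.
  have /orP[pB | pB] := prime_dvd_cross pp pN pNxy.
    by exists false; rewrite mul1r.
  by exists true; rewrite mulN1r mulrN opprK.
set y := (-1) ^+ eps * y0%:Z.
have Nxy : normD D x0 y = p%:Z ^+ 2 by rewrite -Nxy0 /normD exprMn sqrr_sign mul1r.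
have cxy : coprimez x0 y by rewrite /y coprimezE abszMsign -coprimezE.
have Nab' : normD D a b = (p%:Z ^+ logn p c * (c`_p^')%:Z) ^+ 2.
  by rewrite Nab -{1}(partnC p c_gt0) p_part PoszM -natz natrX natz.
have [a' [b' [cab' N' ->]]] := descent_pow pp p_odd pD Nxy cxy cab Nab' (fun _ => pB).
exists eps, a', b'; split=> //.
have -> : c%:R = p%:R ^+ logn p c * (c`_p^')%:R :> algC.
  by rewrite -natrX -natrM -p_part partnC.
rewrite (zeta_exprz _ _ pp Nxy0 zetaxy0) expr_div_n; field.
by rewrite expf_neq0 ?pnatr_eq0 -?lt0n ?part_gt0 ?prime_gt0.
Qed.

Lemma qint_factorization (c : nat) (a b : int) : (0 < c)%N -> coprimez a b ->
  normD D a b = c%:Z ^+ 2 ->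
  exists (s : bool) (e : nat -> bool), qint D a b / c%:R =
    (-1) ^+ s * \prod_(p <- primes c) zeta D p ^ ((-1) ^+ e p * (logn p c)%:Z).
Proof.
elim/ltn_ind: c a b => c IH a b c_gt0 cab Nab.
have [c_le1 | c_gt1] := leqP c 1.
  have c1 : c = 1%N by apply/eqP; rewrite eqn_leq c_le1 c_gt0.
  rewrite c1 in Nab *; have [s ->] := qint_unit (Nab : normD D a b = 1).
  by exists s, xpred0; rewrite big_nil divr1 mulr1.
set p := pdiv c; have pp := pdiv_prime c_gt1; have pc := pdiv_dvd c.
have pc' : p \in primes c by rewrite mem_primes pp c_gt0.
have [eps [a' [b' [cab' N' ->]]]] := peel_prime c_gt0 cab Nab pp pc.
have m_lt : (c`_p^' < c)%N.
  by rewrite -{2}(partnC p c_gt0) ltn_Pmull ?part_gt0 // p_part_gt1.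
have [s [e ->]] := IH _ m_lt a' b' (part_gt0 _ _) cab' N'.
exists s, (fun q => if q == p then eps else e q).
rewrite (big_primes_partC
  (F := fun q k => zeta D q ^ ((-1) ^+ (if q == p then eps else e q) * k%:Z))
  (G := fun q k => zeta D q ^ ((-1) ^+ e q * k%:Z)) pc') /=.
  by rewrite eqxx mulrCA.
by move=> q /negbTE qp k; rewrite qp.
Qed.

End Factorization.

Theorem theorem3p6 (D : nat)
  (hD1 : (1 < D)%N) (hDsf : squarefree D)
  (hDmod : ((- (D%:Z)) %% 4)%Z = 2 \/ ((- (D%:Z)) %% 4)%Z = 3)
  (hcl : class_group_elem2 (- (4 * D)%:Z))
  (a b : int) (c : nat)
  (hz : in_GD D ((a%:~R + b%:~R * sqrtmD D) / c%:R))
  (hab : gcdz a b = 1) (hc : (1 < c)%N) :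
  (forall p : nat, p \in primes c -> odd p /\ legendre_negD_one D p) /\
  exists (s : bool) (e : nat -> bool),
    (a%:~R + b%:~R * sqrtmD D) / c%:R =
      (-1) ^+ s * \prod_(p <- primes c) zeta D p ^ ((-1) ^+ e p * (logn p c)%:Z).
Proof.
have c_gt0 : (0 < c)%N by apply: ltnW.
have D_mod4 : (D %% 4 = 1 \/ D %% 4 = 2)%N by lia.
have cab : coprimez a b by apply/eqP.
have Nab := in_GD_normD (ltnW hD1) c_gt0 hz.
split; last first.
  have [s [e h]] := qint_factorization hD1 hDsf D_mod4 hcl c_gt0 cab Nab.
  by exists s, e.
move=> p; rewrite mem_primes => /and3P[pp _ pc].
exact (prime_dvd_normD_sq hDsf D_mod4 cab Nab pp pc).
Qed.
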